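(* Let $n=2$ agents have additive valuations over a finite set $G$ of indivisible goods. Then there exists a probability distribution over (complete) allocations that is ex-ante EF and ex-post EFX. *)

From HB Require Import structures.
From mathcomp Require Import all_boot all_order all_algebra.
Set Implicit Arguments. Unset Strict Implicit. Unset Printing Implicit Defensive.
Import Order.TTheory GRing.Theory Num.Theory.
Local Open Scope ring_scope.

Definition allocation (n : nat) (G : finType) := {ffun G -> 'I_n}.

Definition bundle (n : nat) (G : finType) (A : allocation n G) (i : 'I_n) : {set G} :=
  [set g | A g == i].

(* An additive valuation is given by nonnegative values of single goods;
   the value of a bundle is the sum of the values of its goods. *)
Definition nonneg_valuation (R : numDomainType) (G : finType) (v : G -> R) : Prop :=
  forall g, 0 <= v g.

Definition val_set (R : numDomainType) (G : finType) (v : G -> R) (S : {set G}) : R :=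
  \sum_(g in S) v g.

Definition EFX (R : numDomainType) (n : nat) (G : finType)
    (v : 'I_n -> G -> R) (A : allocation n G) : Prop :=
  forall i j : 'I_n, forall g, g \in bundle A j ->
    val_set (v i) (bundle A j :\ g) <= val_set (v i) (bundle A i).

Definition distribution (R : numDomainType) (T : finType) (p : T -> R) : Prop :=
  (forall x, 0 <= p x) /\ \sum_x p x = 1.

Definition ex_ante_EF (R : numDomainType) (n : nat) (G : finType)
    (v : 'I_n -> G -> R) (p : allocation n G -> R) : Prop :=
  forall i j : 'I_n,
    \sum_(A : allocation n G) p A * val_set (v i) (bundle A j)
      <= \sum_(A : allocation n G) p A * val_set (v i) (bundle A i).

Definition ex_post_EFX (R : numDomainType) (n : nat) (G : finType)
    (v : 'I_n -> G -> R) (p : allocation n G -> R) : Prop :=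
  forall A : allocation n G, 0 < p A -> EFX v A.

From HB Require Import structures.
From mathcomp Require Import all_boot all_order all_algebra.
From mathcomp Require Import ring lra.
Import Order.TTheory GRing.Theory Num.Theory.
Local Open Scope ring_scope.

(* Cut and choose, each agent cutting with probability 1/2.  Agent k cuts into two
   bundles minimising |u_k(X) - u_k(Y)|, with its zero-valued goods moved to the poorer
   bundle; by minimality this cut is EFX for k whichever bundle k ends up with.  The
   other agent picks its preferred bundle, so both allocations are EFX.  Ex ante, agent
   i loses at most its minimal imbalance as cutter and gains at least that much as
   picker, since any cut has imbalance at least the minimal one in i's valuation. *)

Lemma ord2_neq_rev (i j : 'I_2) : j != i -> j = rev_ord i.
Proof. by move: i j => [[|[|i]] Hi] [[|[|j]] Hj] //= _; apply/val_inj. Qed.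

Lemma rev_ord2_neq (i : 'I_2) : rev_ord i != i.
Proof. by move: i => [[|[|i]] Hi]. Qed.

Lemma addr_ord2 (V : zmodType) (f : 'I_2 -> V) (i : 'I_2) :
  f ord0 + f (rev_ord ord0) = f i + f (rev_ord i).
Proof.
have [->|/ord2_neq_rev ->] := eqVneq i ord0; first by [].
by rewrite rev_ordK addrC.
Qed.

Section Uniform2.
Context {R : numFieldType} {T : finType}.
Variables (a b : T).

Definition uniform2 (x : T) : R := 2^-1 * ((x == a)%:R + (x == b)%:R).

Lemma sum_uniform2 (F : T -> R) : \sum_x uniform2 x * F x = 2^-1 * (F a + F b).
Proof.
have pick c : \sum_x (x == c)%:R * F x = F c.
  rewrite (bigD1 c) //= eqxx mul1r big1 ?addr0 // => x /negbTE ->.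
  by rewrite mul0r.
rewrite -(pick a) -(pick b) -big_split mulr_sumr /=.
by apply: eq_bigr => x _; rewrite /uniform2; ring.
Qed.

Lemma distribution_uniform2 : distribution uniform2.
Proof.
split=> [x|]; first by rewrite mulr_ge0 ?addr_ge0 ?invr_ge0 ?ler0n.
under eq_bigr do rewrite -[uniform2 _]mulr1.
by rewrite sum_uniform2 -[1 + 1]/(2%:R : R) mulVf ?pnatr_eq0.
Qed.

Lemma uniform2_support x : 0 < uniform2 x -> x = a \/ x = b.
Proof.
rewrite /uniform2; have [->|_] := eqVneq x a; first by left.
by have [->|_] := eqVneq x b; [right | rewrite addr0 mulr0 ltxx].
Qed.

End Uniform2.

Section Valuation.
Context {R : realFieldType} {G : finType}.
Implicit Types (u w : G -> R) (S : {set G}).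

Lemma val_setD1 u S g : g \in S -> val_set u (S :\ g) = val_set u S - u g.
Proof. by move=> Sg; rewrite /val_set (big_setD1 _ Sg) /=; ring. Qed.

Lemma val_setU1 u S g : g \notin S -> val_set u (g |: S) = u g + val_set u S.
Proof. by move=> Sg; rewrite /val_set big_setU1. Qed.

Lemma val_setD1_le u S g : nonneg_valuation u -> val_set u (S :\ g) <= val_set u S.
Proof.
move=> hu; have [Sg|Sg] := boolP (g \in S).
  by rewrite val_setD1 // lerBlDr lerDl.
suff -> : S :\ g = S by [].
by apply/setP => x; rewrite !inE; case: eqVneq => // ->; rewrite (negbTE Sg).
Qed.

Lemma val_set_bundleE u n (A : allocation n G) k :
  val_set u (bundle A k) = \sum_g (if A g == k then u g else 0).
Proof. by rewrite /val_set big_mkcond; apply: eq_bigr => g _; rewrite inE. Qed.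

End Valuation.

Section TwoBundles.
Context {R : realFieldType} {G : finType}.
Implicit Types (u w : G -> R) (A P Q : allocation 2 G).

Definition swap A : allocation 2 G := [ffun g => rev_ord (A g)].

Lemma bundle_swap A k : bundle (swap A) k = bundle A (rev_ord k).
Proof.
apply/setP => g; rewrite !inE ffunE.
by apply/eqP/eqP => [<-|->]; rewrite rev_ordK.
Qed.

Definition gap u A k := val_set u (bundle A k) - val_set u (bundle A (rev_ord k)).

Lemma gap_rev u A k : gap u A (rev_ord k) = - gap u A k.
Proof. by rewrite /gap rev_ordK opprB. Qed.

Lemma gap_swap u A k : gap u (swap A) k = - gap u A k.
Proof. by rewrite /gap !bundle_swap rev_ordK opprB. Qed.

Definition imbalance u A := `|gap u A ord0|.

Lemma normr_gap u A k : `|gap u A k| = imbalance u A.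
Proof.
have [->|/ord2_neq_rev ->] := eqVneq k ord0; first by [].
by rewrite gap_rev normrN.
Qed.

Definition min_imbalance u A := forall B, imbalance u A <= imbalance u B.

Definition EFX_for u A := forall j k g, g \in bundle A k ->
  val_set u (bundle A k :\ g) <= val_set u (bundle A j).

Lemma EFX_for_swap u A : EFX_for u A -> EFX_for u (swap A).
Proof. by move=> efxA j k g; rewrite !bundle_swap; apply: efxA. Qed.

Definition move_good A g k : allocation 2 G := [ffun h => if h == g then k else A h].

Lemma gap_move_good u A g i : g \in bundle A i ->
  gap u (move_good A g (rev_ord i)) i = gap u A i - u g *+ 2.
Proof.
rewrite /gap inE => /eqP Ag.
have -> : bundle (move_good A g (rev_ord i)) i = bundle A i :\ g.
  apply/setP => h; rewrite !inE ffunE.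
  by case: (eqVneq h g) => [->|] /=; rewrite ?eqxx ?(negbTE (rev_ord2_neq i)).
have -> : bundle (move_good A g (rev_ord i)) (rev_ord i) = g |: bundle A (rev_ord i).
  by apply/setP => h; rewrite !inE ffunE; case: (eqVneq h g) => [->|]; rewrite ?eqxx.
have gNrev : g \notin bundle A (rev_ord i).
  by rewrite inE Ag eq_sym rev_ord2_neq.
rewrite val_setD1 ?inE ?Ag // val_setU1 //; ring.
Qed.

(* Otherwise moving [g] to the poorer bundle would strictly lower the imbalance. *)
Lemma min_imbalance_EFX_rich u A i g :
  min_imbalance u A -> 0 <= gap u A i -> g \in bundle A i -> 0 < u g ->
  val_set u (bundle A i :\ g) <= val_set u (bundle A (rev_ord i)).
Proof.
move=> minA gap_ge0 Ag ug_gt0; rewrite val_setD1 // leNgt; apply/negP => rich.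
have ug_lt : u g < gap u A i by rewrite /gap; lra.
have := minA (move_good A g (rev_ord i)).
rewrite -(normr_gap _ _ i) -(normr_gap _ (move_good _ _ _) i) gap_move_good //.
by rewrite ger0_norm // ler_normr => /orP[]; lra.
Qed.

Lemma EFX_for_min_imbalance u A i : nonneg_valuation u ->
  min_imbalance u A -> 0 <= gap u A i -> (forall g, g \in bundle A i -> 0 < u g) ->
  EFX_for u A.
Proof.
move=> hu minA gap_ge0 pos j k g Ag.
have [->|/ord2_neq_rev ->] := eqVneq j k; first exact: val_setD1_le.
have [ki|/ord2_neq_rev ki] := eqVneq k i; rewrite ki in Ag *.
  exact: min_imbalance_EFX_rich (pos g Ag).
rewrite rev_ordK; apply: le_trans (val_setD1_le _ _ _ hu) _.
by rewrite -subr_ge0.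
Qed.

(* Needed because EFX also quantifies over goods of value zero. *)
Definition give_null_goods u A i : allocation 2 G :=
  [ffun g => if (A g == i) && (u g == 0) then rev_ord i else A g].

Lemma val_set_give_null_goods u A i k :
  val_set u (bundle (give_null_goods u A i) k) = val_set u (bundle A k).
Proof.
rewrite !val_set_bundleE; apply: eq_bigr => g _; rewrite ffunE.
by case: (boolP (_ && _)) => [/andP[_ /eqP ->]|_]; rewrite ?if_same.
Qed.

Lemma gap_give_null_goods u A i k : gap u (give_null_goods u A i) k = gap u A k.
Proof. by rewrite /gap !val_set_give_null_goods. Qed.

Lemma give_null_goods_pos u A i g : nonneg_valuation u ->
  g \in bundle (give_null_goods u A i) i -> 0 < u g.
Proof.
move=> hu; rewrite inE ffunE lt_def hu andbT.
case: (boolP (_ && _)) => [_|]; first by rewrite (negbTE (rev_ord2_neq i)).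
by rewrite negb_and => /orP[/negbTE-> //|].
Qed.

Lemma balanced_EFX_for_exists u : nonneg_valuation u ->
  exists P, EFX_for u P /\ min_imbalance u P.
Proof.
move=> hu; have [A _ minA] := arg_minP (imbalance u) (P := predT) (isT : predT [ffun=> ord0]).
have [i gap_ge0] : exists i, 0 <= gap u A i.
  have [|/ltW] := lerP 0 (gap u A ord0); first by exists ord0.
  by rewrite -oppr_ge0 -gap_rev; exists (rev_ord ord0).
have minP : min_imbalance u (give_null_goods u A i).
  by move=> B; rewrite /imbalance gap_give_null_goods; apply: minA.
exists (give_null_goods u A i); split => //.
apply: (EFX_for_min_imbalance _ _ i hu minP); first by rewrite gap_give_null_goods.
by move=> g; apply: give_null_goods_pos.
Qed.

Definition picked c w Q : allocation 2 G :=
  if val_set w (bundle Q (rev_ord c)) <= val_set w (bundle Q c) then Q else swap Q.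

Lemma gap_picked c w Q : gap w (picked c w Q) c = `|gap w Q c|.
Proof.
rewrite /picked; case: ifP => [|/negbT]; rewrite -subr_ge0 => ?.
  by rewrite ger0_norm.
by rewrite gap_swap ltr0_norm // ltNge.
Qed.

Lemma normr_gap_picked u c w Q k : `|gap u (picked c w Q) k| = `|gap u Q k|.
Proof. by rewrite /picked; case: ifP; rewrite ?gap_swap ?normrN. Qed.

Lemma picked_prefers c w Q :
  val_set w (bundle (picked c w Q) (rev_ord c)) <= val_set w (bundle (picked c w Q) c).
Proof. by rewrite -subr_ge0 -[_ - _]/(gap _ _ _) gap_picked. Qed.

Lemma EFX_for_picked u c w Q : EFX_for u Q -> EFX_for u (picked c w Q).
Proof. by rewrite /picked; case: ifP => // _; apply: EFX_for_swap. Qed.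

Lemma gap_cut_add_pick_ge0 u w c k P Q : min_imbalance u P ->
  0 <= gap u (picked c w P) k + gap u (picked k u Q) k.
Proof.
move=> minP; have := ler_norm (- gap u (picked c w P) k).
rewrite normrN normr_gap_picked normr_gap gap_picked normr_gap.
by have := minP Q; lra.
Qed.

End TwoBundles.

Lemma EFX_cut_and_pick (R : realFieldType) (G : finType) (v : 'I_2 -> G -> R) k Q :
  nonneg_valuation (v (rev_ord k)) -> EFX_for (v k) Q ->
  EFX v (picked (rev_ord k) (v (rev_ord k)) Q).
Proof.
move=> hv efxQ i j g jg.
have [->|/ord2_neq_rev ->] := eqVneq i k; first exact: EFX_for_picked.
apply: le_trans (val_setD1_le _ _ _ hv) _.
have [->|/ord2_neq_rev ->] := eqVneq j (rev_ord k); first by [].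
exact: picked_prefers.
Qed.

Theorem proposition1 (R : realFieldType) (G : finType) (v : 'I_2 -> G -> R)
  (hv : forall i, nonneg_valuation (v i)) :
  exists p : allocation 2 G -> R,
    [/\ distribution p, ex_ante_EF v p & ex_post_EFX v p].
Proof.
have [P HP] := fin_all_exists (fun k => balanced_EFX_for_exists _ (hv k)).
pose cut_by k := picked (rev_ord k) (v (rev_ord k)) (P k).
exists (uniform2 (cut_by ord0) (cut_by (rev_ord ord0))); split.
- exact: distribution_uniform2.
- move=> i j; rewrite !sum_uniform2 ler_pM2l ?invr_gt0 ?ltr0n //.
  have [->|/ord2_neq_rev ->] := eqVneq j i; first by [].
  rewrite (addr_ord2 _ (fun k => val_set (v i) (bundle (cut_by k) _)) i) /=.
  rewrite (addr_ord2 _ (fun k => val_set (v i) (bundle (cut_by k) _)) i) /=.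
  have := gap_cut_add_pick_ge0 (v i) (v (rev_ord i)) (rev_ord i) i (P i) (P (rev_ord i)) (HP i).2.
  by rewrite /cut_by rev_ordK /gap; lra.
- by move=> A /uniform2_support[] ->; apply: EFX_cut_and_pick (hv _) (HP _).1.
Qed.
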